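(* Let $\mathcal V$ be a finite vocabulary, $C\ge 2$, $\gamma\in\mathbb R$, and let $s,v:\mathcal V\to\mathbb R$ be unknown maps satisfying $\sum_{\tau\in\mathcal V}s(\tau)=\gamma$. Let $G(\mathbf t)=F^{\mathrm{SLALOM}}_{s,v}(\mathbf t)$ for all sequences $\mathbf t$ over $\mathcal V$ with $1\le|\mathbf t|\le C$, and assume $G$ is non-constant on this set of sequences. Then, given $\gamma$ and query access to $G$, the maps $s$ and $v$ can be recovered exactly using $2|\mathcal V|-1$ queries of $G$, all on sequences of length at most $2$ (the queried sequences may be chosen adaptively based on previous answers). In particular, $s$ and $v$ are uniquely determined by $G$ together with $\gamma$.
   Context: SLALOM (Softmax-Linked Additive Log Odds Model): given a token importance map $s:\mathcal V\to\mathbb R$ and a token value map $v:\mathcal V\to\mathbb R$, for a sequence $\mathbf t$ define $\alpha_i(\mathbf t)=\exp(s(t_i))/\sum_{j=1}^{|\mathbf t|}\exp(s(t_j))$ and $F^{\mathrm{SLALOM}}_{s,v}(\mathbf t)=\sum_{i=1}^{|\mathbf t|}\alpha_i(\mathbf t)\,v(t_i)$ (sums over positions, counting repeated tokens with multiplicity). The normalization constraint is $\sum_{\tau\in\mathcal V}s(\tau)=\gamma$ for a fixed user-chosen $\gamma\in\mathbb R$. *)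

From HB Require Import structures.
From mathcomp Require Import all_boot all_order all_algebra.
From mathcomp Require Import all_classical all_reals all_analysis.
Set Implicit Arguments. Unset Strict Implicit. Unset Printing Implicit Defensive.
Import Order.TTheory GRing.Theory Num.Theory.
Local Open Scope ring_scope.

(* SLALOM: sums over positions of t (repeated tokens counted with multiplicity). *)
Definition slalom_alpha (R : realType) (V : Type) (s : V -> R) (t : seq V) (x : V) : R :=
  expR (s x) / \sum_(y <- t) expR (s y).

Definition slalom (R : realType) (V : Type) (s v : V -> R) (t : seq V) : R :=
  \sum_(x <- t) slalom_alpha s t x * v x.

Definition nonconst_on (R : realType) (V : Type) (C : nat) (G : seq V -> R) : Prop :=
  exists t1 t2 : seq V,
    [/\ (0 < size t1 <= C)%N, (0 < size t2 <= C)%N & G t1 <> G t2].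

(* An adaptive (deterministic) query strategy: the next query is chosen as a
   function of the answers received so far; the final output is a function of
   all answers. *)
Record strategy (V : Type) (R : Type) := Strategy {
  query : seq R -> seq V;
  output : seq R -> (V -> R) * (V -> R) }.

Fixpoint run (V : Type) (R : Type) (G : seq V -> R) (S : strategy V R) (k : nat)
  : seq R :=
  match k with
  | 0 => [::]
  | k'.+1 => let h := run G S k' in rcons h (G (query S h))
  end.

Set Warnings "-notation-overridden,-ambiguous-paths,-notation-incompatible-prefix".
From HB Require Import structures.
From mathcomp Require Import all_boot all_order all_algebra.
From mathcomp Require Import all_classical all_reals all_analysis.
From mathcomp Require Import ring zify.
Set Implicit Arguments. Unset Strict Implicit. Unset Printing Implicit Defensive.
Import Order.TTheory GRing.Theory Num.Theory.
Local Open Scope ring_scope.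

(* A one-token sequence has weight 1, so G [:: x] = v x and the
   first |V| queries read off v.  For a pair with v a <> v b, the answer is a
   convex combination of v a and v b whose odds are exp (s a) / exp (s b), so
   ln ((G [:: a; b] - v b) / (v a - G [:: a; b])) = s a - s b.  Since G is
   non-constant, v is non-constant; fix a pivot d and a witness w with
   v w <> v d, and pair every other token y with d, or with w when
   v y = v d.  The |V| - 1 pair queries give all differences s y - s d, and
   the constraint sum s = gamma fixes the remaining additive constant. *)

Lemma size_run (V R : Type) (G : seq V -> R) (S : strategy V R) k :
  size (run G S k) = k.
Proof. by elim: k => //= k IHk; rewrite size_rcons IHk. Qed.

Lemma nth_run (V R : Type) (x0 : R) (G : seq V -> R) (S : strategy V R) k j :
  (j < k)%N -> nth x0 (run G S k) j = G (query S (run G S j)).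
Proof.
elim: k => // k IHk; rewrite ltnS leq_eqVlt => /orP[/eqP ->|ltjk] /=.
  by rewrite nth_rcons size_run ltnn eqxx.
by rewrite nth_rcons size_run ltjk IHk.
Qed.

Lemma eq_run (V R : Type) (G1 G2 : seq V -> R) (S : strategy V R) K :
  (forall h, (size h < K)%N -> G1 (query S h) = G2 (query S h)) ->
  forall k, (k <= K)%N -> run G1 S k = run G2 S k.
Proof.
move=> eqG; elim=> // k IHk ltkK /=.
by rewrite IHk ?(ltnW ltkK) // eqG // size_run.
Qed.

Section SlalomValues.
Variables (R : realType) (V : Type) (s v : V -> R).

Lemma slalom1 x : slalom s v [:: x] = v x.
Proof.
rewrite /slalom /slalom_alpha !big_cons !big_nil !addr0 divff ?mul1r //.
by rewrite gt_eqF // expR_gt0.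
Qed.

Lemma slalom_cst c t : (forall x, v x = c) -> (0 < size t)%N -> slalom s v t = c.
Proof.
move=> vc; case: t => // x t _; rewrite /slalom /slalom_alpha.
under eq_bigr => y _ do rewrite vc.
rewrite -big_distrl /= -mulr_suml divff ?mul1r //.
by rewrite big_cons gt_eqF // ltr_pwDl ?expR_gt0 // sumr_ge0.
Qed.

Lemma slalom2_logit a b : v a != v b ->
  ln ((slalom s v [:: a; b] - v b) / (v a - slalom s v [:: a; b])) = s a - s b.
Proof.
move=> vab; rewrite /slalom /slalom_alpha !big_cons !big_nil !addr0.
have ea := expR_gt0 (s a); have eb := expR_gt0 (s b).
set Z := expR (s a) + expR (s b).
have Z0 : Z != 0 by rewrite gt_eqF // addr_gt0.
have vab0 : v a - v b != 0 by rewrite subr_eq0.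
have -> : (expR (s a) / Z * v a + expR (s b) / Z * v b - v b) /
          (v a - (expR (s a) / Z * v a + expR (s b) / Z * v b)) =
          expR (s a) / expR (s b).
  rewrite /Z; field.
  have -> : v a * Z - (expR (s a) * v a + expR (s b) * v b) = expR (s b) * (v a - v b).
    by rewrite /Z; ring.
  by rewrite -/Z Z0 mulf_eq0 negb_or vab0 gt_eqF.
by rewrite -expRB expRK.
Qed.

Lemma slalom_nonconst_value C d : nonconst_on C (slalom s v) -> exists x, v x != v d.
Proof.
case=> t1 [t2 [/andP[t1_gt0 _] /andP[t2_gt0 _] neqG]].
apply: contrapT => /forallNP vcst.
have vd x : v x = v d by apply/eqP/negPn/negP/vcst.
by apply: neqG; rewrite (slalom_cst vd t1_gt0) (slalom_cst vd t2_gt0).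
Qed.

End SlalomValues.

Lemma shift_by_mean (R : numFieldType) (V : finType) (s g : V -> R) c :
  (0 < #|V|)%N -> (forall y, s y = g y + c) ->
  forall y, s y = g y + (\sum_x s x - \sum_x g x) / #|V|%:R.
Proof.
move=> V_gt0 sgc y.
have -> : \sum_x s x - \sum_x g x = c * #|V|%:R.
  rewrite (eq_bigr _ (fun x _ => sgc x)) big_split /= sumr_const.
  by rewrite mulr_natr; ring.
by rewrite mulfK ?pnatr_eq0 -?lt0n.
Qed.

Section Recovery.
Variables (R : realType) (V : finType) (gamma : R) (d : V).

(* The answer history h is read as: h`_i = G [:: (enum V)`_i] for i < |V|,
   then h`_(|V| + j - 1) = the answer to the pair query of (enum V)`_j,
   for 1 <= j < |V|; the pivot d is meant to be (enum V)`_0. *)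
Definition est_v (h : seq R) (x : V) : R := nth 0 h (index x (enum V)).

Definition witness (h : seq R) : V :=
  nth d (enum V) (find (fun x => est_v h x != est_v h d) (enum V)).

Definition partner (h : seq R) (y : V) : V :=
  if est_v h y != est_v h d then d else witness h.

Definition next_query (h : seq R) : seq V :=
  if (size h < #|V|)%N then [:: nth d (enum V) (size h)]
  else let y := nth d (enum V) (size h - #|V|).+1 in [:: y; partner h y].

Definition pair_answer (h : seq R) (y : V) : R :=
  nth 0 h (#|V| + index y (enum V)).-1.

Definition logit (h : seq R) (a b : V) (g : R) : R :=
  ln ((g - est_v h b) / (est_v h a - g)).

Definition est_gap (h : seq R) (y : V) : R :=
  if y == d then 0 else
  if est_v h y != est_v h d then logit h y d (pair_answer h y)
  else logit h y (witness h) (pair_answer h y)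
       + logit h (witness h) d (pair_answer h (witness h)).

Definition est_s (h : seq R) (y : V) : R :=
  est_gap h y + (gamma - \sum_x est_gap h x) / #|V|%:R.

Definition recovery : strategy V R := Strategy next_query (fun h => (est_s h, est_v h)).

Lemma size_next_query h : (0 < size (next_query h) <= 2)%N.
Proof. by rewrite /next_query; case: ifP. Qed.

Section Correctness.
Variables (rest : seq V) (s v : V -> R).
Hypotheses (enum_V : enum V = d :: rest) (v_nonconst : exists x, v x != v d).

Let G := slalom s v.
Let N := (2 * #|V|).-1.
Let H := run G recovery N.

Let card_gt0 : (0 < #|V|)%N.
Proof. by rewrite cardE enum_V. Qed.

Let index_lt_card x : (index x (enum V) < #|V|)%N.
Proof. by rewrite cardE index_mem mem_enum. Qed.

Lemma est_v_run k : (#|V| <= k)%N -> est_v (run G recovery k) = v.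
Proof.
move=> Vk; apply/funext => x.
rewrite /est_v nth_run ?(leq_trans (index_lt_card x)) //= /next_query size_run.
by rewrite index_lt_card nth_index ?mem_enum // /G slalom1.
Qed.

Let w := nth d (enum V) (find (fun x => v x != v d) (enum V)).

Let v_w : v w != v d.
Proof.
case: v_nonconst => x vx.
by apply: (@nth_find _ d (fun x => v x != v d)); apply/hasP; exists x; rewrite ?mem_enum.
Qed.

Let w_neq_d : w != d.
Proof. by apply: contraNneq v_w => ->. Qed.

Let P y := if v y != v d then d else w.

Lemma witness_run k : (#|V| <= k)%N -> witness (run G recovery k) = w.
Proof. by move=> Vk; rewrite /witness est_v_run. Qed.

Lemma partner_run k : (#|V| <= k)%N -> partner (run G recovery k) =1 P.
Proof. by move=> Vk y; rewrite /partner est_v_run // witness_run. Qed.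

Lemma pair_answer_run y : y != d -> pair_answer H y = G [:: y; P y].
Proof.
move=> yd; have := index_lt_card y.
have : (0 < index y (enum V))%N by rewrite enum_V /= eq_sym (negbTE yd).
set j := index y (enum V) => j_gt0 j_lt.
rewrite /pair_answer nth_run; last by rewrite /N; lia.
have Vj : (#|V| <= (#|V| + j).-1)%N by lia.
rewrite /= /next_query size_run ltnNge Vj /=.
have -> : ((#|V| + j).-1 - #|V|).+1 = j by lia.
by rewrite nth_index ?mem_enum // partner_run.
Qed.

Lemma est_gap_run y : est_gap H y = s y - s d.
Proof.
have VN : (#|V| <= N)%N by rewrite /N; lia.
have logitH a b : v a != v b -> logit H a b (G [:: a; b]) = s a - s b.
  by move=> vab; rewrite /logit est_v_run //; apply: slalom2_logit.
rewrite /est_gap; have [->|yd] := eqVneq y d; first by rewrite subrr.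
rewrite est_v_run // witness_run // !pair_answer_run // /P.
case: (boolP (v y != v d)) => [vyd|/negPn/eqP vyd] /=; first exact: logitH.
by rewrite v_w !logitH //; [ring | rewrite vyd eq_sym].
Qed.

Lemma recovery_correct : \sum_(tau : V) s tau = gamma -> output recovery H = (s, v).
Proof.
move=> sum_s; rewrite /= est_v_run; last by rewrite /N; lia.
congr pair; apply/funext => y; rewrite /est_s -sum_s.
have -> : \sum_x est_gap H x = \sum_x (s x - s d).
  by apply: eq_bigr => x _; apply: est_gap_run.
rewrite est_gap_run; apply/esym.
by apply: (shift_by_mean (g := fun x => s x - s d) (c := s d) card_gt0) => x; rewrite subrK.
Qed.

End Correctness.
End Recovery.

Lemma recovery_strategy (R : realType) (V : finType) (C : nat) (gamma : R) :
  exists S : strategy V R,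
    (forall h : seq R, (size h < (2 * #|V|).-1)%N -> (0 < size (query S h) <= 2)%N) /\
    (forall s v : V -> R, \sum_(tau : V) s tau = gamma -> nonconst_on C (slalom s v) ->
       output S (run (slalom s v) S (2 * #|V|).-1) = (s, v)).
Proof.
case enum_V: (enum V) => [|d rest].
  exists (Strategy (fun _ => [::]) (fun _ => (fun _ => 0, fun _ => 0))).
  split=> [h|s v _ [[|x t1] [t2 [//]]]]; first by rewrite cardE enum_V.
  by have := mem_enum V x; rewrite enum_V.
exists (recovery gamma d); split=> [h _|s v sum_s nc]; first exact: size_next_query.
exact: (recovery_correct enum_V (slalom_nonconst_value d nc)).
Qed.

Theorem proposition5p2 (R : realType) (V : finType) (C : nat) (gamma : R) :
  (2 <= C)%N ->
  (exists S : strategy V R,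
     (forall h : seq R, (size h < (2 * #|V|).-1)%N ->
        (0 < size (query S h) <= 2)%N) /\
     (forall s v : V -> R,
        \sum_(tau : V) s tau = gamma ->
        nonconst_on C (slalom s v) ->
        output S (run (slalom s v) S (2 * #|V|).-1) = (s, v)))
  /\
  (forall s v s' v' : V -> R,
     \sum_(tau : V) s tau = gamma -> \sum_(tau : V) s' tau = gamma ->
     nonconst_on C (slalom s v) ->
     (forall t : seq V, (0 < size t <= C)%N -> slalom s v t = slalom s' v' t) ->
     s = s' /\ v = v').
Proof.
move=> C_ge2; have S_ok := recovery_strategy V C gamma; split=> //.
move=> s v s' v' sum_s sum_s' nc eqG.
have [S [S_short S_correct]] := S_ok.
have nc' : nonconst_on C (slalom s' v').
  by case: nc => t1 [t2 [t1C t2C neq]]; exists t1, t2; rewrite -!eqG.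
have same_run : run (slalom s v) S (2 * #|V|).-1 = run (slalom s' v') S (2 * #|V|).-1.
  apply: (@eq_run _ _ _ _ S (2 * #|V|).-1) => // h /S_short /andP[q_gt0 q_le2].
  by apply: eqG; rewrite q_gt0 (leq_trans q_le2 C_ge2).
by have := S_correct _ _ sum_s nc; rewrite same_run S_correct //; case.
Qed.
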